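(* Let $a>0$, $k\ne0$, $\alpha=\arctan k$, and let $S_{a,k}=\{(r\cos\varphi,r\sin\varphi)\in\mathbb{R}^2: r=ae^{k\varphi},\ \varphi\in\mathbb{R}\}$ be the logarithmic spiral. Then $\mathrm{Ent}[S_{a,k}]\le 1/|\sin\alpha|<\infty$.
   Context: For a curve $\Gamma$, $F_{x_0,\lambda}[\Gamma]=\frac{1}{\sqrt{4\pi\lambda}}\int_\Gamma e^{-|x-x_0|^2/(4\lambda)}\,ds$ ($ds$ arc length) and $\mathrm{Ent}[\Gamma]=\sup_{x_0\in\mathbb{R}^2,\lambda>0}F_{x_0,\lambda}[\Gamma]$. *)

From HB Require Import structures.
From mathcomp Require Import all_boot all_order all_algebra.
From mathcomp Require Import all_classical all_reals all_analysis.
Set Implicit Arguments. Unset Strict Implicit. Unset Printing Implicit Defensive.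
Import Order.TTheory GRing.Theory Num.Theory.
Import numFieldNormedType.Exports.
Local Open Scope classical_set_scope.
Local Open Scope ring_scope.

Section Defs.
Variable R : realType.

Definition sqdist (p q : R * R) : R := (p.1 - q.1) ^+ 2 + (p.2 - q.2) ^+ 2.

Definition speed (g : R -> R * R) (t : R) : R :=
  Num.sqrt (derive1 (fun s => (g s).1) t ^+ 2 + derive1 (fun s => (g s).2) t ^+ 2).

(* F_{x0,lam}[Gamma] = (4 pi lam)^{-1/2} \int_Gamma exp(-|x-x0|^2/(4 lam)) ds,
   with Gamma = g(R) and ds = |g'(t)| dt (Lebesgue integral over R). *)
Definition Fcurve (g : R -> R * R) (x0 : R * R) (lam : R) : \bar R :=
  (\int[@lebesgue_measure R]_(t in [set: R])
     ((Num.sqrt (4 * pi * lam))^-1 * expR (- sqdist (g t) x0 / (4 * lam))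
        * speed g t)%:E)%E.

Definition Ent (g : R -> R * R) : \bar R :=
  ereal_sup [set y | exists x0 : R * R, exists lam : R, 0 < lam /\ y = Fcurve g x0 lam].

Definition spiral (a k : R) (phi : R) : R * R :=
  (a * expR (k * phi) * cos phi, a * expR (k * phi) * sin phi).

End Defs.

From HB Require Import structures.
From mathcomp Require Import all_boot all_order all_algebra.
From mathcomp Require Import all_classical all_reals all_analysis.
From mathcomp Require Import ring measurable_realfun.
Import Order.TTheory GRing.Theory Num.Theory.
Import numFieldNormedType.Exports.
Local Open Scope classical_set_scope.
Local Open Scope ring_scope.

(** Along the spiral the radius r = a e^(k phi) satisfies |x - x0| >= |r - |x0||
    and ds = sqrt(1 + k^2) r dphi.  Hence the heat kernel is dominated by the
    Gaussian in u = (r - |x0|) / (2 sqrt lam), a strictly monotone function of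
    phi with |du| = |k| r dphi / (2 sqrt lam).  Changing variables bounds
    F_{x0,lam} by sqrt(1 + k^2) / (|k| sqrt pi) times the Gaussian integral
    sqrt pi, and sqrt(1 + k^2) / |k| = 1 / |sin (atan k)|. *)

Section gauss_substitution.
Variable R : realType.
Local Notation mu := (@lebesgue_measure R).

Lemma is_derive1_continuous (f : R -> R) (x df : R) :
  is_derive x 1 f df -> {for x, continuous f}.
Proof. by move=> fdf; apply/differentiable_continuous/derivable1_diffP; exact: ex_derive. Qed.

Lemma gauss_funN (x : R) : gauss_fun (- x) = gauss_fun x.
Proof. by rewrite /gauss_fun sqrrN. Qed.

Lemma ge0_integralT_le_sym_itv (f : R -> R) (M : \bar R) :
  measurable_fun [set: R] f -> (forall x, 0 <= f x) ->
  (forall n : nat, (\int[mu]_(x in `[(- n%:R)%R, n%:R]) (f x)%:E <= M)%E) ->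
  (\int[mu]_(x in [set: R]) (f x)%:E <= M)%E.
Proof.
move=> mf f0 fM.
pose F (n : nat) : set R := `[(- n%:R)%R, (n%:R : R)]%classic.
have F_nd : nondecreasing_seq F.
  by move=> n m nm; rewrite subsetEset; apply: subset_itv; rewrite bnd_simp ?lerN2 ler_nat.
have mF n : measurable (F n) by exact: measurable_itv.
have mfF n : measurable_fun (F n) (EFin \o f).
  by apply/measurable_EFinP; exact: measurable_funTS.
have f0F n x : F n x -> (0 <= (f x)%:E)%E by rewrite lee_fin.
have := ge0_nondecreasing_set_cvg_integral F_nd mF mfF f0F (mu := mu).
rewrite bigcup_itvT => /cvg_lim <-//.
apply: lime_le; last exact: nearW.
exact/ereal_nondecreasing_is_cvgn/ge0_nondecreasing_set_nondecreasing_integral.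
Qed.

Lemma gauss_comp_integral_itv_le (f f' : R -> R) (a b : R) : a <= b ->
  (forall x : R, is_derive x 1 f (f' x)) -> continuous f' -> (forall x, 0 < f' x) ->
  (\int[mu]_(x in `[a, b]) (gauss_fun (f x) * f' x)%:E <= (Num.sqrt pi)%:E)%E.
Proof.
move=> ab df cf' f'0.
have f'E : derive1 f = f' by apply/funext => x; rewrite derive1E; exact: derive_val.
have cf (x : R) : {for x, continuous f} by exact: is_derive1_continuous (df x).
rewrite [leLHS](_ : _ = \int[mu]_(x in `[a, b]) (((gauss_fun \o f) * derive1 f) x)%:E)%E; last first.
  by apply: eq_integral => x _; rewrite f'E.
rewrite -integration_by_substitution_increasing //; rewrite ?f'E.
- rewrite -integralT_gauss; apply: ge0_subset_integral => //=.
  + by apply/measurable_EFinP; exact: measurable_gauss_fun.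
  + by move=> x _; rewrite lee_fin; exact: gauss_fun_ge0.
- apply: gtr0_derive1_lt_cc => [x _|x _|].
  + by have dfx := df x; exact: ex_derive.
  + by rewrite f'E.
  + exact/continuous_subspaceT/cf.
- by move=> x _; exact: cf'.
- by apply/cvg_ex; eexists; apply: cvg_at_right_filter; exact: cf'.
- by apply/cvg_ex; eexists; apply: cvg_at_left_filter; exact: cf'.
- split; first by move=> x _; have dfx := df x; exact: ex_derive.
  + exact/cvg_at_right_filter/cf.
  + exact/cvg_at_left_filter/cf.
- exact/continuous_subspaceT/continuous_gauss_fun.
Qed.

Lemma gauss_comp_integralT_le (f f' : R -> R) :
  (forall x : R, is_derive x 1 f (f' x)) -> continuous f' ->
  (forall x, 0 < f' x) \/ (forall x, f' x < 0) ->
  (\int[mu]_(x in [set: R]) (gauss_fun (f x) * `|f' x|)%:E <= (Num.sqrt pi)%:E)%E.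
Proof.
wlog f'0 : f f' / forall x, 0 < f' x.
  (* otherwise use -f, as the Gaussian is even; the derivative hypothesis
     for -f is found by instance resolution from is_deriveN *)
  move=> ih df cf' [f'0|f'0]; first by apply: ih => //; left.
  under eq_integral do rewrite -gauss_funN -normrN.
  apply: ih => [x||]; first by rewrite oppr_gt0.
  - by move=> x; exact/continuousN/cf'.
  - by left=> x; rewrite oppr_gt0.
move=> df cf' _.
have cf (x : R) : {for x, continuous f} by exact: is_derive1_continuous (df x).
have cgff' : continuous (fun x => gauss_fun (f x) * f' x).
  move=> x; have cgf : {for x, continuous (fun x => gauss_fun (f x))}.
    by apply: continuous_comp; [exact: cf | exact: continuous_gauss_fun].
  exact: (@continuousM R R _ _ x cgf (cf' x)).
under eq_integral do rewrite (gtr0_norm (f'0 _)).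
apply: ge0_integralT_le_sym_itv => [|x|n].
- exact: (continuous_measurable_fun cgff').
- by rewrite mulr_ge0 ?gauss_fun_ge0 ?ltW.
- apply: gauss_comp_integral_itv_le => //.
  by rewrite -subr_ge0 opprK addr_ge0 ?ler0n.
Qed.

End gauss_substitution.

Section spiral.
Variable R : realType.
Implicit Types a k c x : R.

Lemma is_derive_scaled_expR c k x :
  is_derive x 1 (fun s => c * expR (k * s)) (k * (c * expR (k * x))).
Proof.
have dkx : is_derive x 1 (fun s : R => k * s) k.
  by have := is_deriveZ k (is_derive_id x 1); rewrite /GRing.scale /= mulr1.
apply: is_derive_eq (is_deriveZ c (is_derive1_comp (is_derive_expR (k * x)) dkx)) _.
by rewrite /GRing.scale /=; ring.
Qed.

Lemma is_derive_spiral1 a k x :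
  is_derive x 1 (fun s => (spiral a k s).1) (a * expR (k * x) * (k * cos x - sin x)).
Proof.
apply: is_derive_eq (is_deriveM (is_derive_scaled_expR a k x) (is_derive_cos x)) _.
by rewrite /GRing.scale /=; ring.
Qed.

Lemma is_derive_spiral2 a k x :
  is_derive x 1 (fun s => (spiral a k s).2) (a * expR (k * x) * (k * sin x + cos x)).
Proof.
apply: is_derive_eq (is_deriveM (is_derive_scaled_expR a k x) (is_derive_sin x)) _.
by rewrite /GRing.scale /=; ring.
Qed.

Lemma speed_spiral a k x : 0 <= a ->
  speed (spiral a k) x = Num.sqrt (1 + k ^+ 2) * (a * expR (k * x)).
Proof.
move=> a0; have r0 : 0 <= a * expR (k * x) by rewrite mulr_ge0 ?expR_ge0.
have := is_derive_spiral1 a k x; have := is_derive_spiral2 a k x.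
rewrite /speed !derive1E => d2 d1; rewrite !derive_val.
set r := a * expR (k * x).
rewrite (_ : (r * (k * cos x - sin x)) ^+ 2 + (r * (k * sin x + cos x)) ^+ 2 =
  (1 + k ^+ 2) * r ^+ 2 * (cos x ^+ 2 + sin x ^+ 2)); last by ring.
by rewrite cos2Dsin2 mulr1 sqrtrM ?addr_ge0 ?sqr_ge0 // sqrtr_sqr ger0_norm.
Qed.

Lemma sqdist_polar_ge (r t : R) (x0 : R * R) : 0 <= r ->
  (r - Num.sqrt (x0.1 ^+ 2 + x0.2 ^+ 2)) ^+ 2 <= sqdist (r * cos t, r * sin t) x0.
Proof.
case: x0 => p q r0; rewrite /sqdist /=.
have pq0 : 0 <= p ^+ 2 + q ^+ 2 by rewrite addr_ge0 ?sqr_ge0.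
set w := p * cos t + q * sin t.
have w2_le : w ^+ 2 <= p ^+ 2 + q ^+ 2.
  rewrite -[leRHS]mulr1 -(cos2Dsin2 t) -subr_ge0.
  by rewrite (_ : _ - _ = (p * sin t - q * cos t) ^+ 2) ?sqr_ge0 // /w; ring.
have w_le : w <= Num.sqrt (p ^+ 2 + q ^+ 2).
  by rewrite (le_trans (ler_norm w)) // -sqrtr_sqr ler_wsqrtr.
rewrite -subr_ge0 (_ : _ - _ = 2 * r * (Num.sqrt (p ^+ 2 + q ^+ 2) - w)).
  by rewrite !mulr_ge0 ?subr_ge0.
have -> : (r - Num.sqrt (p ^+ 2 + q ^+ 2)) ^+ 2 = r ^+ 2 * (cos t ^+ 2 + sin t ^+ 2)
    - 2 * r * Num.sqrt (p ^+ 2 + q ^+ 2) + Num.sqrt (p ^+ 2 + q ^+ 2) ^+ 2.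
  by rewrite cos2Dsin2; ring.
by rewrite sqr_sqrtr // /w; ring.
Qed.

Lemma sin_atan (k : R) : sin (atan k) = k / Num.sqrt (1 + k ^+ 2).
Proof.
have c0 : cos (atan k) != 0.
  by rewrite cos_atan invr_eq0 gt_eqF // sqrtr_gt0 ltr_pwDl ?sqr_ge0.
by rewrite -cos_atan -[X in _ = X * _]atanK /tan mulfVK.
Qed.

Lemma measurable_sqdist (g : R -> R * R) (x0 : R * R) :
  measurable_fun [set: R] (fun x => (g x).1) -> measurable_fun [set: R] (fun x => (g x).2) ->
  measurable_fun [set: R] (fun x => sqdist (g x) x0).
Proof.
by move=> m1 m2; apply: measurable_funD; apply: measurable_funX;
  apply: measurable_funB => //; exact: measurable_cst.
Qed.

Section spiral_Fcurve.
Variables (a k lam : R) (x0 : R * R).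
Hypotheses (a_gt0 : 0 < a) (k_neq0 : k != 0) (lam_gt0 : 0 < lam).

Let rho := Num.sqrt (x0.1 ^+ 2 + x0.2 ^+ 2).
Let s := 2 * Num.sqrt lam.
Let u (x : R) := (a * expR (k * x) - rho) / s.
Let u' (x : R) := k * a / s * expR (k * x).
Let K := Num.sqrt (1 + k ^+ 2).

Let s_gt0 : 0 < s. Proof. by rewrite mulr_gt0 ?sqrtr_gt0. Qed.

Let is_derive_u (x : R) : is_derive x 1 u (u' x).
Proof.
rewrite /u; apply: is_derive_eq (is_deriveM (is_deriveB (is_derive_scaled_expR a k x)
  (is_derive_cst rho x 1)) (is_derive_cst s^-1 x 1)) _.
by rewrite /GRing.scale /u' /=; ring.
Qed.

Let continuous_u' : continuous u'.
Proof. by move=> x; exact: is_derive1_continuous (is_derive_scaled_expR _ k x). Qed.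

Let u'_sign : (forall x, 0 < u' x) \/ (forall x, u' x < 0).
Proof.
move: k_neq0; rewrite neq_lt => /orP[k_lt0|k_gt0].
  by right=> x; rewrite /u' !pmulr_llt0 ?expR_gt0 ?invr_gt0.
by left=> x; rewrite /u' !pmulr_lgt0 ?expR_gt0 ?invr_gt0.
Qed.

Let Fcurve_integrand_le (x : R) :
  (Num.sqrt (4 * pi * lam))^-1 * expR (- sqdist (spiral a k x) x0 / (4 * lam))
    * speed (spiral a k) x
  <= K / (`|k| * Num.sqrt pi) * (gauss_fun (u x) * `|u' x|).
Proof.
rewrite speed_spiral; last exact: ltW.
set r := a * expR (k * x).
have r_ge0 : 0 <= r by rewrite mulr_ge0 ?expR_ge0 ?ltW.
have s2 : s ^+ 2 = 4 * lam.
  by rewrite exprMn sqr_sqrtr ?ltW // [2 ^+ 2]expr2 -natrM.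
have heat_le_gauss : expR (- sqdist (spiral a k x) x0 / (4 * lam)) <= gauss_fun (u x).
  rewrite /gauss_fun ler_expR /u expr_div_n s2 mulNr lerN2.
  by rewrite ler_pM2r ?invr_gt0 ?mulr_gt0 //; exact: sqdist_polar_ge.
have -> : Num.sqrt (4 * pi * lam) = Num.sqrt pi * s.
  by rewrite mulrAC -s2 sqrtrM ?sqr_ge0 // sqrtr_sqr gtr0_norm // mulrC.
have -> : `|u' x| = `|k| * r / s.
  rewrite /u' /r !normrM (gtr0_norm a_gt0) (gtr0_norm (expR_gt0 _)).
  by rewrite (@gtr0_norm _ s^-1) ?invr_gt0 //; ring.
have k_gt0 : 0 < `|k| by rewrite normr_gt0.
have sqrtpi_gt0 : 0 < Num.sqrt pi :> R by rewrite sqrtr_gt0 pi_gt0.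
rewrite [leRHS](_ : _ = (Num.sqrt pi * s)^-1 * gauss_fun (u x) * (K * r)); last first.
  by field; rewrite !gt_eqF.
rewrite ler_wpM2r ?ler_wpM2l ?mulr_ge0 ?sqrtr_ge0 //.
- exact: ltW.
- by rewrite invr_ge0 mulr_ge0 ?sqrtr_ge0 ?ltW.
Qed.

Let measurable_Fcurve_integrand : measurable_fun [set: R] (fun x =>
  (Num.sqrt (4 * pi * lam))^-1 * expR (- sqdist (spiral a k x) x0 / (4 * lam))
    * speed (spiral a k) x).
Proof.
have speedE : speed (spiral a k) = fun x => K * (a * expR (k * x)).
  by apply/funext => x; rewrite speed_spiral ?ltW.
rewrite speedE; apply: measurable_funM; last first.
  apply: measurable_funM; first exact: measurable_cst.
  apply: continuous_measurable_fun => x.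
  exact: is_derive1_continuous (is_derive_scaled_expR a k x).
apply: measurable_funM; first exact: measurable_cst.
apply: measurableT_comp; first exact: measurable_expR.
apply: measurable_funM; last exact: measurable_cst.
apply: measurable_funN; apply: measurable_sqdist; apply: continuous_measurable_fun => x.
  exact: is_derive1_continuous (is_derive_spiral1 a k x).
exact: is_derive1_continuous (is_derive_spiral2 a k x).
Qed.

Let measurable_gauss_u : measurable_fun [set: R] (fun x => gauss_fun (u x) * `|u' x|).
Proof.
have cu : continuous u by move=> x; exact: is_derive1_continuous (is_derive_u x).
apply: measurable_funM; apply: measurableT_comp => //.
- exact: measurable_gauss_fun.
- exact: continuous_measurable_fun cu.
- exact: continuous_measurable_fun continuous_u'.
Qed.

Lemma Fcurve_spiral_le : (Fcurve (spiral a k) x0 lam <= (K / `|k|)%:E)%E.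
Proof.
have sqrtpi_gt0 : 0 < Num.sqrt pi :> R by rewrite sqrtr_gt0 pi_gt0.
set c := K / (`|k| * Num.sqrt pi).
have c_ge0 : 0 <= c by rewrite divr_ge0 ?sqrtr_ge0 ?mulr_ge0.
have gu_ge0 x : 0 <= gauss_fun (u x) * `|u' x| by rewrite mulr_ge0 ?gauss_fun_ge0.
rewrite /Fcurve; apply: (@le_trans _ _ (\int[@lebesgue_measure R]_(x in [set: R])
  (c * (gauss_fun (u x) * `|u' x|))%:E)%E).
  apply: ge0_le_integral => //.
  - by move=> x _; rewrite lee_fin mulr_ge0 ?sqrtr_ge0 // mulr_ge0 ?expR_ge0.
  - exact/measurable_EFinP.
  - by apply/measurable_EFinP; apply: measurable_funM => //; exact: measurable_cst.
  - by move=> x _; rewrite lee_fin Fcurve_integrand_le.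
under eq_integral do rewrite EFinM.
rewrite ge0_integralZl_EFin //; [|by move=> x _; rewrite lee_fin|exact/measurable_EFinP].
apply: (@le_trans _ _ (c%:E * (Num.sqrt pi)%:E)%E).
  apply: lee_wpmul2l; first by rewrite lee_fin.
  exact: gauss_comp_integralT_le is_derive_u continuous_u' u'_sign.
by rewrite -EFinM lee_fin /c invfM mulrA mulfVK ?gt_eqF.
Qed.

End spiral_Fcurve.

End spiral.

Theorem propositionA1 (R : realType) (a k : R) :
  0 < a -> k != 0 ->
  (Ent (spiral a k) <= (`|sin (atan k)|)^-1%:E)%E.
Proof.
move=> a_gt0 k_neq0.
have -> : `|sin (atan k)|^-1 = Num.sqrt (1 + k ^+ 2) / `|k|.
  rewrite sin_atan normrM normfV (gtr0_norm (x := Num.sqrt _)) ?invf_div //.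
  by rewrite sqrtr_gt0 ltr_pwDl ?sqr_ge0.
apply: ub_ereal_sup => _ [x0 [lam [lam_gt0 ->]]].
exact: Fcurve_spiral_le.
Qed.
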